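(* Let $H=\bigcup_{j=1}^n(c_j,d_j)\subset\mathbb R$ with pairwise disjoint closed intervals $[c_j,d_j]$, let $\mathcal B$ be finite and $m\ge2$. Assume for each $\beta\in\mathcal B$: $b_\beta,\theta_\beta\in C^m(\bar H)$, $b_\beta>0$ on $\bar H$, $\theta_\beta(H)\subset H$; and that there exist $\mu\ge1$ and $\kappa<1$ with $|\theta_\omega(x)-\theta_\omega(y)|\le\kappa|x-y|$ for all $\omega\in\mathcal B_\mu$, $x,y\in\bar H$. Let $M_0=\sup\{|D^2\theta_\beta(x)|:\beta\in\mathcal B,x\in\bar H\}$, $\epsilon_0=1$ and $\epsilon_\nu=\sup\{|\theta_\omega(x)-\theta_\omega(y)|/|x-y|:\omega\in\mathcal B_\nu,\ x,y\in H,\ x\ne y\}$ for $\nu\ge1$. Then for every $k\ge1$, every $\omega\in\mathcal B_k$ and every $x\in\bar H$, $$|D^2\theta_\omega(x)|\le M_0\sum_{j=0}^{k-1}\epsilon_j^2\,\epsilon_{k-j-1}.$$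
   Context: $D=d/dx$. $\mathcal B_\nu=\{(j_1,\ldots,j_\nu):j_k\in\mathcal B\}$ and $\theta_{(j_1,\ldots,j_\nu)}=\theta_{j_\nu}\circ\cdots\circ\theta_{j_1}$. $C^m(\bar H)$ denotes real $C^m$ functions on $H$ whose derivatives of order $\le m$ extend continuously to $\bar H$. *)

From Stdlib Require Import Reals Lra List.
From Coquelicot Require Import Coquelicot.
Open Scope R_scope.

Definition Hset (c d : nat -> R) (n : nat) (x : R) : Prop :=
  exists j, (j < n)%nat /\ c j < x < d j.

Definition closure_of (A : R -> Prop) (x : R) : Prop :=
  forall eps : R, 0 < eps -> exists y, A y /\ Rabs (x - y) < eps.

(* [ext_at A g x l]: g(y) -> l as y -> x within A (the value at x of the
   continuous extension of g|_A to the closure of A). *)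
Definition ext_at (A : R -> Prop) (g : R -> R) (x l : R) : Prop :=
  filterlim g (within A (locally x)) (locally l).

(* f in C^m(closure H): all derivatives of order <= m exist on the open set H
   and extend continuously to the closure of H. *)
Definition Cm_bar (A : R -> Prop) (m : nat) (f : R -> R) : Prop :=
  forall k, (k <= m)%nat ->
    (forall x, A x -> ex_derive_n f k x) /\
    (forall x, closure_of A x -> exists l, ext_at A (Derive_n f k) x l).

(* theta_(j1,...,jv) = theta_jv o ... o theta_j1 *)
Fixpoint theta_w {B : Type} (theta : B -> R -> R) (w : list B) : R -> R :=
  match w with
  | nil => fun x => x
  | j :: w' => fun x => theta_w theta w' (theta j x)
  end.

Definition M0 {B : Type} (A : R -> Prop) (theta : B -> R -> R) : R :=
  real (Lub_Rbar (fun r => exists (beta : B) x l,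
          closure_of A x /\ ext_at A (Derive_n (theta beta) 2) x l /\ r = Rabs l)).

Definition eps_nu {B : Type} (A : R -> Prop) (theta : B -> R -> R) (nu : nat) : R :=
  match nu with
  | O => 1
  | S _ => real (Lub_Rbar (fun r => exists (w : list B) x y,
          length w = nu /\ A x /\ A y /\ x <> y /\
          r = Rabs (theta_w theta w x - theta_w theta w y) / Rabs (x - y)))
  end.

From Stdlib Require Import Reals List Lra Lia Classical ClassicalEpsilon.
From Coquelicot Require Import Coquelicot.
Open Scope R_scope.

(* By the chain rule, peeling off the first letter [a] of a word gives
     D^2 theta_(a::w) = D^2 theta_a * (D theta_w o theta_a) + (D theta_a)^2 * (D^2 theta_w o theta_a),
   so D^2 theta_omega (x) is a sum over the letters of omega of the second derivative of that
   letter (at most M_0), times the first derivative of the suffix after it (at most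
   eps_(k-j-1)), times the square of the first derivative of the prefix before it (at most
   eps_j^2); a first derivative of theta_omega is a limit of difference quotients, hence at
   most eps_|omega|.  The analytic work is the finiteness of the suprema M_0 and eps_nu
   ([real] of an unbounded [Lub_Rbar] is 0): the first two derivatives of the theta_beta
   extend continuously to the compact closure of H, hence are bounded, and since H is bounded
   with components a positive distance apart, the mean value theorem bounds the difference
   quotients of theta_omega for close points and diam H / gap bounds them for far ones. *)

Lemma ext_at_near (A : R -> Prop) g x l eps :
  ext_at A g x l -> 0 < eps ->
  exists del, 0 < del /\ forall y, Rabs (y - x) < del -> A y -> Rabs (g y - l) < eps.
Proof.
  intros Hlim Heps.
  destruct (proj1 (filterlim_locally _ _) Hlim (mkposreal eps Heps)) as [del Hdel].
  exists del; split; [apply cond_pos|]. intros y Hy Ay. exact (Hdel y Hy Ay).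
Qed.

Lemma ext_at_eq (A : R -> Prop) g x l : A x -> ext_at A g x l -> g x = l.
Proof.
  intros Ax Hlim. apply NNPP; intros Hne.
  assert (Hpos : 0 < Rabs (g x - l)) by (apply Rabs_pos_lt; lra).
  destruct (ext_at_near A g x l _ Hlim Hpos) as [del [Hdel Hnear]].
  specialize (Hnear x). rewrite Rminus_diag, Rabs_R0 in Hnear. specialize (Hnear Hdel Ax). lra.
Qed.

Lemma ext_at_abs_le (A : R -> Prop) g x l K :
  (forall y, A y -> Rabs (g y) <= K) -> closure_of A x -> ext_at A g x l -> Rabs l <= K.
Proof.
  intros HK Hx Hlim. apply Rnot_lt_le; intros HlK.
  assert (Hpos : 0 < Rabs l - K) by lra.
  destruct (ext_at_near A g x l _ Hlim Hpos) as [del [Hdel Hnear]].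
  destruct (Hx del Hdel) as [y [Ay Hy]]. rewrite Rabs_minus_sym in Hy.
  specialize (Hnear y Hy Ay). specialize (HK y Ay).
  pose proof (Rabs_triang_inv l (g y)). rewrite Rabs_minus_sym in Hnear. lra.
Qed.

Lemma ext_closure_bounded (A : R -> Prop) g R0 :
  (forall x, A x -> -R0 <= x <= R0) ->
  (forall x, closure_of A x -> exists l, ext_at A g x l) ->
  exists M, forall y, A y -> Rabs (g y) <= M.
Proof.
  intros HA Hext. apply NNPP; intros Hunb.
  assert (Hbig : forall N : nat, exists y, A y /\ INR N < Rabs (g y)).
  { intros N. apply NNPP; intros HN. apply Hunb. exists (INR N). intros y Ay.
    apply Rnot_lt_le; intros Hy. apply HN. now exists y. }
  destruct (choice _ Hbig) as [u Hu].
  destruct (Bolzano_Weierstrass u (fun t => -R0 <= t <= R0) (compact_P3 _ _)) as [l Hl];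
    [intros N; apply HA, Hu|].
  assert (Hcl : closure_of A l).
  { intros eps Heps.
    destruct (Hl (disc l (mkposreal eps Heps)) O) as [p [_ Hp]];
      [exists (mkposreal eps Heps); now intros|].
    exists (u p); split; [apply Hu|]. rewrite Rabs_minus_sym; exact Hp. }
  destruct (Hext l Hcl) as [l' Hl'].
  destruct (ext_at_near A g l l' 1 Hl' Rlt_0_1) as [del [Hdel Hnear]].
  destruct (INR_unbounded (Rabs l' + 1)) as [N HN].
  destruct (Hl (disc l (mkposreal del Hdel)) N) as [p [HNp Hp]];
    [exists (mkposreal del Hdel); now intros|].
  specialize (Hnear (u p) Hp (proj1 (Hu p))).
  pose proof (proj2 (Hu p)). pose proof (le_INR _ _ HNp).
  pose proof (Rabs_triang_inv (g (u p)) l'). lra.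
Qed.

Lemma bounded_family_list {B : Type} (A : R -> Prop) (f : B -> R -> R) (L : list B) :
  (forall b, exists M, forall y, A y -> Rabs (f b y) <= M) ->
  exists M, forall b, In b L -> forall y, A y -> Rabs (f b y) <= M.
Proof.
  intros Hf. induction L as [|a L [M1 HM1]].
  - exists 0. intros b [].
  - destruct (Hf a) as [M2 HM2]. exists (Rmax M1 M2).
    intros b [<-|Hb] y Ay.
    + eapply Rle_trans; [apply HM2, Ay|apply Rmax_r].
    + eapply Rle_trans; [apply (HM1 b Hb y Ay)|apply Rmax_l].
Qed.

Lemma Cm_bar_family_Derive_n_bounded {B : Type} (A : R -> Prop) R0 (L : list B) m
  (f : B -> R -> R) k :
  (forall x, A x -> -R0 <= x <= R0) -> (forall b, In b L) ->
  (forall b, Cm_bar A m (f b)) -> (k <= m)%nat ->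
  exists M, forall b y, A y -> Rabs (Derive_n (f b) k y) <= M.
Proof.
  intros HA HL Hf Hk.
  destruct (bounded_family_list A (fun b => Derive_n (f b) k) L) as [M HM].
  { intros b. exact (ext_closure_bounded A _ R0 HA (proj2 (Hf b k Hk))). }
  exists M. intros b. apply HM, HL.
Qed.

Lemma Lub_Rbar_real_ge (S : R -> Prop) r :
  (exists K, forall s, S s -> s <= K) -> S r -> r <= real (Lub_Rbar S).
Proof.
  intros [K HK] Sr. destruct (Lub_Rbar_correct S) as [Hub Hlub].
  assert (Hr := Hub r Sr).
  assert (HlubK : Rbar_le (Lub_Rbar S) K) by (apply Hlub; exact HK).
  destruct (Lub_Rbar S); simpl in *; tauto || lra.
Qed.

Lemma Hset_locally c d n x : Hset c d n x -> locally x (Hset c d n).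
Proof.
  intros [j [Hj Hx]].
  assert (Hpos : 0 < Rmin (x - c j) (d j - x)) by (apply Rmin_glb_lt; lra).
  exists (mkposreal _ Hpos). intros y Hy. change (Rabs (y - x) < Rmin (x - c j) (d j - x)) in Hy.
  exists j. split; [exact Hj|].
  pose proof (Rmin_l (x - c j) (d j - x)). pose proof (Rmin_r (x - c j) (d j - x)).
  apply Rabs_def2 in Hy. lra.
Qed.

Lemma Hset_bounded c d n : exists R0, forall x, Hset c d n x -> -R0 <= x <= R0.
Proof.
  induction n as [|n [R0 HR0]].
  - exists 0. intros x [j [Hj _]]. lia.
  - exists (Rmax R0 (Rmax (Rabs (c n)) (Rabs (d n)))). intros x [j [Hj Hx]].
    pose proof (Rmax_l R0 (Rmax (Rabs (c n)) (Rabs (d n)))).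
    pose proof (Rmax_r R0 (Rmax (Rabs (c n)) (Rabs (d n)))).
    pose proof (Rmax_l (Rabs (c n)) (Rabs (d n))). pose proof (Rmax_r (Rabs (c n)) (Rabs (d n))).
    destruct (Nat.eq_dec j n) as [->|Hjn].
    + pose proof (Rle_abs (- c n)). pose proof (Rle_abs (d n)). rewrite Rabs_Ropp in *. lra.
    + assert (Hxn : Hset c d n x) by (exists j; split; [lia|exact Hx]).
      specialize (HR0 x Hxn). lra.
Qed.

Lemma disjoint_intervals_gap (p q r s : R) :
  (forall x, ~ ((p <= x <= q) /\ (r <= x <= s))) ->
  exists del, 0 < del /\ forall x y, p < x < q -> r < y < s -> del <= Rabs (x - y).
Proof.
  intros Hdisj.
  destruct (Rlt_dec q r) as [Hqr|Hqr]; [|destruct (Rlt_dec s p) as [Hsp|Hsp]].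
  - exists (r - q). split; [lra|]. intros x y Hx Hy. rewrite Rabs_left; lra.
  - exists (p - s). split; [lra|]. intros x y Hx Hy. rewrite Rabs_right; lra.
  - exists 1. split; [lra|]. intros x y Hx Hy. exfalso. apply (Hdisj (Rmax p r)).
    unfold Rmax; destruct (Rle_dec p r); lra.
Qed.

Lemma Hset_interval_gap c d n p q :
  (forall j, (j < n)%nat -> forall x, ~ ((c j <= x <= d j) /\ (p <= x <= q))) ->
  exists del, 0 < del /\ forall x y, Hset c d n x -> p < y < q -> del <= Rabs (x - y).
Proof.
  induction n as [|n IH]; intros Hdisj.
  - exists 1. split; [lra|]. intros x y [j [Hj _]]; lia.
  - destruct IH as [del1 [Hdel1 Hgap1]]; [intros j Hj; apply Hdisj; lia|].
    destruct (disjoint_intervals_gap _ _ _ _ (Hdisj n (Nat.lt_succ_diag_r n)))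
      as [del2 [Hdel2 Hgap2]].
    exists (Rmin del1 del2). split; [now apply Rmin_glb_lt|].
    intros x y [j [Hj Hx]] Hy.
    destruct (Nat.eq_dec j n) as [->|Hjn].
    + eapply Rle_trans; [apply Rmin_r|]. now apply Hgap2.
    + eapply Rle_trans; [apply Rmin_l|].
      apply Hgap1; [exists j; split; [lia|exact Hx]|exact Hy].
Qed.

Lemma Hset_close_same_component c d n :
  (forall i j, (i < n)%nat -> (j < n)%nat -> i <> j ->
     forall x, ~ ((c i <= x <= d i) /\ (c j <= x <= d j))) ->
  exists del, 0 < del /\ forall x y, Hset c d n x -> Hset c d n y -> Rabs (x - y) < del ->
    exists j, (j < n)%nat /\ c j < x < d j /\ c j < y < d j.
Proof.
  induction n as [|n IH]; intros Hdisj.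
  - exists 1. split; [lra|]. intros x y [j [Hj _]]; lia.
  - destruct IH as [del1 [Hdel1 Hclose]]; [intros i j Hi Hj; apply Hdisj; lia|].
    destruct (Hset_interval_gap c d n (c n) (d n)) as [del2 [Hdel2 Hgap]];
      [intros j Hj; apply Hdisj; lia|].
    exists (Rmin del1 del2). split; [now apply Rmin_glb_lt|].
    intros x y [i [Hi Hx]] [j [Hj Hy]] Hxy.
    pose proof (Rmin_l del1 del2); pose proof (Rmin_r del1 del2).
    destruct (Nat.eq_dec i n) as [->|Hin], (Nat.eq_dec j n) as [->|Hjn].
    + exists n. split; [lia|auto].
    + assert (Hyn : Hset c d n y) by (exists j; split; [lia|exact Hy]).
      specialize (Hgap y x Hyn Hx). rewrite Rabs_minus_sym in Hgap. lra.
    + assert (Hxn : Hset c d n x) by (exists i; split; [lia|exact Hx]).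
      specialize (Hgap x y Hxn Hy). lra.
    + destruct (Hclose x y) as [k [Hk Hxyk]];
        [exists i; split; [lia|exact Hx]|exists j; split; [lia|exact Hy]|lra|].
      exists k. split; [lia|exact Hxyk].
Qed.

Lemma Hset_close_segment c d n :
  (forall i j, (i < n)%nat -> (j < n)%nat -> i <> j ->
     forall x, ~ ((c i <= x <= d i) /\ (c j <= x <= d j))) ->
  exists del, 0 < del /\ forall x y, Hset c d n x -> Hset c d n y -> Rabs (x - y) < del ->
    forall z, Rmin x y <= z <= Rmax x y -> Hset c d n z.
Proof.
  intros Hdisj. destruct (Hset_close_same_component c d n Hdisj) as [del [Hdel Hclose]].
  exists del. split; [exact Hdel|]. intros x y Hx Hy Hxy z Hz.
  destruct (Hclose x y Hx Hy Hxy) as [j [Hj Hxyj]].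
  exists j. split; [exact Hj|]. unfold Rmin, Rmax in Hz. destruct (Rle_dec x y); lra.
Qed.

Fixpoint sum_below (f : nat -> R) (k : nat) : R :=
  match k with O => 0 | S k => sum_below f k + f k end.

Lemma sum_below_S_shift f k : sum_below f (S k) = f O + sum_below (fun j => f (S j)) k.
Proof. induction k as [|k IH]; simpl in *; [lra|]. rewrite IH. lra. Qed.

Lemma sum_below_ext f g k : (forall j, (j < k)%nat -> f j = g j) -> sum_below f k = sum_below g k.
Proof.
  induction k as [|k IH]; intros Hfg; simpl; [reflexivity|].
  rewrite IH, Hfg; [reflexivity|lia|intros j Hj; apply Hfg; lia].
Qed.

Lemma sum_f_R0_sum_below f n : sum_f_R0 f n = sum_below f (S n).
Proof. induction n as [|n IH]; simpl in *; [lra|]. rewrite IH. reflexivity. Qed.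

Lemma abs_triang_weighted_le t g a h s M E1 E2 :
  Rabs t <= M -> Rabs g <= E1 -> Rabs s <= E2 ->
  Rabs (t * g + a ^ 2 * h) * s ^ 2 <= M * (E2 ^ 2 * E1) + Rabs h * (s * a) ^ 2.
Proof.
  intros Ht Hg Hs.
  assert (Htri : Rabs (t * g + a ^ 2 * h) <= Rabs t * Rabs g + a ^ 2 * Rabs h).
  { eapply Rle_trans; [apply Rabs_triang|].
    rewrite !Rabs_mult, <- RPow_abs, pow2_abs. lra. }
  assert (Hs2 : s ^ 2 <= E2 ^ 2).
  { rewrite <- pow2_abs. apply pow_incr. split; [apply Rabs_pos|exact Hs]. }
  assert (Htg : Rabs t * Rabs g <= M * E1) by (apply Rmult_le_compat; auto using Rabs_pos).
  pose proof (Rmult_le_pos _ _ (Rabs_pos t) (Rabs_pos g)). pose proof (pow2_ge_0 s).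
  apply Rle_trans with ((Rabs t * Rabs g + a ^ 2 * Rabs h) * s ^ 2);
    [apply Rmult_le_compat_r; assumption|].
  nra.
Qed.

Lemma Derive_abs_le_quotient (A : R -> Prop) F E x :
  locally x A -> ex_derive F x ->
  (forall y, A y -> y <> x -> Rabs (F y - F x) / Rabs (y - x) <= E) ->
  Rabs (Derive F x) <= E.
Proof.
  intros [r Hr] HF HE. apply Rnot_lt_le; intros HEl.
  assert (Hlim : derivable_pt_lim F x (Derive F x)) by now apply is_derive_Reals, Derive_correct.
  destruct (Hlim (Rabs (Derive F x) - E)) as [del Hdel]; [lra|].
  assert (Hmin : 0 < Rmin del r) by (apply Rmin_glb_lt; apply cond_pos).
  pose proof (Rmin_l del r). pose proof (Rmin_r del r).
  set (h := Rmin del r / 2).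
  assert (Hh : 0 < h) by (unfold h; lra).
  assert (Hhdel : Rabs h < del) by (rewrite Rabs_pos_eq; unfold h; lra).
  assert (HAh : A (x + h)).
  { apply Hr. change (Rabs (x + h - x) < r). replace (x + h - x) with h by ring.
    rewrite Rabs_pos_eq; unfold h; lra. }
  specialize (Hdel h ltac:(lra) Hhdel).
  specialize (HE (x + h) HAh ltac:(lra)).
  replace (x + h - x) with h in HE by ring. rewrite <- Rabs_div in HE by lra.
  pose proof (Rabs_triang_inv (Derive F x) ((F (x + h) - F x) / h)).
  rewrite Rabs_minus_sym in Hdel. lra.
Qed.

Lemma theta_w_app {B : Type} (theta : B -> R -> R) u v x :
  theta_w theta (u ++ v) x = theta_w theta v (theta_w theta u x).
Proof. revert x; induction u as [|a u IH]; intros x; simpl; auto. Qed.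

Section Iterates.

Variables (B : Type) (A : R -> Prop) (theta : B -> R -> R).
Hypothesis A_open : forall x, A x -> locally x A.
Hypothesis theta_maps : forall b x, A x -> A (theta b x).
Hypothesis theta_D1 : forall b x, A x -> ex_derive (theta b) x.
Hypothesis theta_D2 : forall b x, A x -> ex_derive (Derive (theta b)) x.

Lemma theta_w_maps w x : A x -> A (theta_w theta w x).
Proof. revert x; induction w as [|a w IH]; intros x Hx; simpl; auto. Qed.

Lemma ex_derive_theta_w w x : A x -> ex_derive (theta_w theta w) x.
Proof.
  revert x; induction w as [|a w IH]; intros x Hx; simpl.
  - apply ex_derive_id.
  - apply (ex_derive_comp (theta_w theta w) (theta a)); auto.
Qed.

Lemma Derive_theta_w_cons a w x : A x ->
  Derive (theta_w theta (a :: w)) x = Derive (theta a) x * Derive (theta_w theta w) (theta a x).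
Proof. intros Hx. cbn [theta_w]. apply Derive_comp; auto using ex_derive_theta_w. Qed.

Lemma Derive_theta_w_rcons u a x : A x ->
  Derive (theta_w theta (u ++ a :: nil)) x =
  Derive (theta_w theta u) x * Derive (theta a) (theta_w theta u x).
Proof.
  intros Hx. rewrite (Derive_ext _ (fun t => theta a (theta_w theta u t)))
    by (intros t; now rewrite theta_w_app).
  apply Derive_comp; auto using ex_derive_theta_w, theta_w_maps.
Qed.

Lemma ex_derive_Derive_theta_w w x : A x -> ex_derive (Derive (theta_w theta w)) x.
Proof.
  revert x; induction w as [|a w IH]; intros x Hx.
  - apply (ex_derive_ext (fun _ => 1)); [intros t; symmetry; apply Derive_id|].
    apply ex_derive_const.
  - apply (ex_derive_ext_loc (fun t => Derive (theta a) t * Derive (theta_w theta w) (theta a t))).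
    + apply (filter_imp A); [|auto]. intros t Ht. symmetry. now apply Derive_theta_w_cons.
    + apply ex_derive_mult; [auto|]. apply (ex_derive_comp (Derive (theta_w theta w))); auto.
Qed.

Lemma Derive2_theta_w_cons a w x : A x ->
  Derive (Derive (theta_w theta (a :: w))) x =
  Derive (Derive (theta a)) x * Derive (theta_w theta w) (theta a x) +
  Derive (theta a) x ^ 2 * Derive (Derive (theta_w theta w)) (theta a x).
Proof.
  intros Hx.
  rewrite (Derive_ext_loc _ (fun t => Derive (theta a) t * Derive (theta_w theta w) (theta a t))).
  - rewrite Derive_mult, (Derive_comp (Derive (theta_w theta w)) (theta a));
      auto using ex_derive_Derive_theta_w.
    + ring.
    + apply (ex_derive_comp (Derive (theta_w theta w))); auto using ex_derive_Derive_theta_w.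
  - apply (filter_imp A); [|auto]. intros t Ht. now apply Derive_theta_w_cons.
Qed.

Section DifferenceQuotients.

Variables (R0 del L : R).
Hypothesis A_bounded : forall x, A x -> -R0 <= x <= R0.
Hypothesis del_pos : 0 < del.
Hypothesis A_close_segment : forall x y, A x -> A y -> Rabs (x - y) < del ->
  forall z, Rmin x y <= z <= Rmax x y -> A z.
Hypothesis Derive_theta_le : forall b x, A x -> Rabs (Derive (theta b) x) <= L.

Lemma Derive_theta_w_le_pow w x : A x -> Rabs (Derive (theta_w theta w) x) <= L ^ length w.
Proof.
  revert x; induction w as [|a w IH]; intros x Hx.
  - cbn. rewrite Derive_id, Rabs_R1. lra.
  - rewrite Derive_theta_w_cons, Rabs_mult by exact Hx.
    apply Rmult_le_compat; auto using Rabs_pos.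
Qed.

Lemma theta_w_lipschitz_near w x y : A x -> A y -> Rabs (x - y) < del ->
  Rabs (theta_w theta w x - theta_w theta w y) <= L ^ length w * Rabs (x - y).
Proof.
  intros Hx Hy Hxy. pose proof (A_close_segment x y Hx Hy Hxy) as Hseg.
  destruct (MVT_gen (theta_w theta w) x y (Derive (theta_w theta w))) as [z [Hz Hmvt]].
  - intros z Hz. apply Derive_correct, ex_derive_theta_w, Hseg. lra.
  - intros z Hz. apply continuity_pt_filterlim, (ex_derive_continuous (V := R_NormedModule)).
    exact (ex_derive_theta_w w z (Hseg z Hz)).
  - rewrite Rabs_minus_sym, Hmvt, Rabs_mult, (Rabs_minus_sym y x).
    apply Rmult_le_compat_r; [apply Rabs_pos|]. exact (Derive_theta_w_le_pow w z (Hseg z Hz)).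
Qed.

(* [2 * R0 / del] bounds the quotient of points at distance at least [del], [A] having
   diameter at most [2 * R0]. *)
Lemma theta_w_lipschitz w x y : A x -> A y ->
  Rabs (theta_w theta w x - theta_w theta w y)
  <= Rmax (2 * R0 / del) (L ^ length w) * Rabs (x - y).
Proof.
  intros Hx Hy. pose proof (Rabs_pos (x - y)).
  destruct (Rlt_le_dec (Rabs (x - y)) del) as [Hnear|Hfar].
  - eapply Rle_trans; [now apply theta_w_lipschitz_near|].
    apply Rmult_le_compat_r; [assumption|apply Rmax_r].
  - pose proof (A_bounded x Hx).
    pose proof (A_bounded _ (theta_w_maps w x Hx)). pose proof (A_bounded _ (theta_w_maps w y Hy)).
    apply Rle_trans with (2 * R0); [apply Rabs_le; lra|].
    apply Rle_trans with (2 * R0 / del * del); [right; field; lra|].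
    apply Rle_trans with (2 * R0 / del * Rabs (x - y));
      [apply Rmult_le_compat_l; [apply Rdiv_le_0_compat; lra|exact Hfar]|].
    apply Rmult_le_compat_r; [assumption|apply Rmax_l].
Qed.

Lemma Derive_theta_w_le_eps_nu v y : A y ->
  Rabs (Derive (theta_w theta v) y) <= eps_nu A theta (length v).
Proof.
  intros Hy. destruct v as [|a v].
  - cbn. rewrite Derive_id, Rabs_R1. lra.
  - apply (Derive_abs_le_quotient A); [now apply A_open|now apply ex_derive_theta_w|].
    intros z Hz Hzy. cbn [eps_nu length]. apply Lub_Rbar_real_ge.
    + exists (Rmax (2 * R0 / del) (L ^ S (length v))).
      intros s [w [x1 [y1 [Hlen [Hx1 [Hy1 [Hxy ->]]]]]]].
      assert (Hpos : 0 < Rabs (x1 - y1)) by (apply Rabs_pos_lt; lra).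
      apply Rmult_le_reg_r with (Rabs (x1 - y1)); [exact Hpos|].
      unfold Rdiv. rewrite Rmult_assoc, Rinv_l, Rmult_1_r by lra.
      rewrite <- Hlen. now apply theta_w_lipschitz.
    + exists (a :: v), z, y. repeat split; auto.
Qed.

End DifferenceQuotients.

Section SecondDerivative.

Variables (e : nat -> R) (M : R).
Hypothesis Derive_theta_w_le : forall v y, A y -> Rabs (Derive (theta_w theta v) y) <= e (length v).
Hypothesis Derive2_theta_le : forall b y, A y -> Rabs (Derive (Derive (theta b)) y) <= M.

(* Peeling off the first letter of [w] moves it into the prefix [u], whose
   squared derivative carries the factor [(D theta_a)^2] of the chain rule. *)
Lemma Derive2_theta_w_weighted_le w u x : A x ->
  Rabs (Derive (Derive (theta_w theta w)) (theta_w theta u x)) * Derive (theta_w theta u) x ^ 2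
  <= M * sum_below (fun j => e (length u + j)%nat ^ 2 * e (length w - S j)%nat) (length w).
Proof.
  revert u; induction w as [|a w IH]; intros u Hx.
  - rewrite (Derive_ext (Derive (theta_w theta nil)) (fun _ => 1)) by apply Derive_id.
    rewrite Derive_const, Rabs_R0. simpl. lra.
  - set (y := theta_w theta u x).
    assert (Hy : A y) by now apply theta_w_maps.
    specialize (IH (u ++ a :: nil) Hx).
    rewrite Derive_theta_w_rcons, theta_w_app in IH by exact Hx. fold y in IH.
    rewrite Derive2_theta_w_cons by exact Hy.
    eapply Rle_trans;
      [apply (abs_triang_weighted_le _ _ _ _ _ M (e (length w)) (e (length u)));
       auto using theta_maps|].
    eapply Rle_trans; [apply Rplus_le_compat_l; exact IH|].
    cbn [length]. rewrite sum_below_S_shift, Rmult_plus_distr_l, Nat.add_0_r.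
    replace (S (length w) - 1)%nat with (length w) by lia.
    apply Req_le. do 2 f_equal. apply sum_below_ext.
    intros j _. rewrite length_app. cbn [length].
    now replace (length u + 1 + j)%nat with (length u + S j)%nat by lia.
Qed.

Lemma Derive2_theta_w_le w y : A y ->
  Rabs (Derive (Derive (theta_w theta w)) y)
  <= M * sum_below (fun j => e j ^ 2 * e (length w - S j)%nat) (length w).
Proof.
  intros Hy. pose proof (Derive2_theta_w_weighted_le w nil y Hy) as Hle.
  cbn [theta_w length Nat.add] in Hle. rewrite Derive_id in Hle. lra.
Qed.

End SecondDerivative.
End Iterates.

Lemma Derive2_le_M0 {B : Type} (A : R -> Prop) (theta : B -> R -> R) M1 :
  (forall b x, closure_of A x -> exists l, ext_at A (Derive_n (theta b) 2) x l) ->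
  (forall b y, A y -> Rabs (Derive_n (theta b) 2 y) <= M1) ->
  forall b y, A y -> Rabs (Derive (Derive (theta b)) y) <= M0 A theta.
Proof.
  intros Hext HM1 b y Hy. apply Lub_Rbar_real_ge.
  - exists M1. intros s [b' [x [l [Hx [Hl ->]]]]]. exact (ext_at_abs_le A _ x l M1 (HM1 b') Hx Hl).
  - assert (Hcl : closure_of A y).
    { intros eps Heps. exists y. split; [exact Hy|]. now rewrite Rminus_diag, Rabs_R0. }
    destruct (Hext b y Hcl) as [l Hl]. exists b, y, l. repeat split; [exact Hcl|exact Hl|].
    now rewrite <- (ext_at_eq A _ y l Hy Hl).
Qed.

Theorem lemma6p2
  (n : nat) (c d : nat -> R)
  (Hdisj : forall i j, (i < n)%nat -> (j < n)%nat -> i <> j ->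
             forall x, ~ ((c i <= x <= d i) /\ (c j <= x <= d j)))
  (B : Type) (enumB : list B) (HBfin : forall beta : B, In beta enumB)
  (m : nat) (Hm : (2 <= m)%nat)
  (b theta : B -> R -> R)
  (Hb : forall beta, Cm_bar (Hset c d n) m (b beta))
  (Hbpos : forall beta x l, closure_of (Hset c d n) x ->
             ext_at (Hset c d n) (b beta) x l -> 0 < l)
  (Htheta : forall beta, Cm_bar (Hset c d n) m (theta beta))
  (Hmaps : forall beta x, Hset c d n x -> Hset c d n (theta beta x))
  (mu : nat) (kappa : R) (Hmu : (1 <= mu)%nat) (Hkappa : kappa < 1)
  (Hcontr : forall w : list B, length w = mu ->
     forall x y l1 l2, closure_of (Hset c d n) x -> closure_of (Hset c d n) y ->
       ext_at (Hset c d n) (theta_w theta w) x l1 ->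
       ext_at (Hset c d n) (theta_w theta w) y l2 ->
       Rabs (l1 - l2) <= kappa * Rabs (x - y)) :
  forall (k : nat) (w : list B), (1 <= k)%nat -> length w = k ->
  forall x l, closure_of (Hset c d n) x ->
    ext_at (Hset c d n) (Derive_n (theta_w theta w) 2) x l ->
    Rabs l <= M0 (Hset c d n) theta *
      sum_f_R0 (fun j => (eps_nu (Hset c d n) theta j) ^ 2 *
                         eps_nu (Hset c d n) theta (k - j - 1)) (k - 1).

Proof.
  intros k w Hk Hw x l Hx Hlim.
  set (A := Hset c d n) in *.
  destruct (Hset_bounded c d n) as [R0 HR0].
  destruct (Hset_close_segment c d n Hdisj) as [del [Hdel Hseg]].
  destruct (Cm_bar_family_Derive_n_bounded A R0 enumB m theta 1 HR0 HBfin Htheta) as [L HL];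
    [lia|].
  destruct (Cm_bar_family_Derive_n_bounded A R0 enumB m theta 2 HR0 HBfin Htheta) as [M1 HM1];
    [lia|].
  assert (HD1 : forall b y, A y -> ex_derive (theta b) y)
    by (intros b' y; apply (Htheta b' 1%nat); lia).
  assert (HD2 : forall b y, A y -> ex_derive (Derive (theta b)) y)
    by (intros b' y; apply (Htheta b' 2%nat); lia).
  pose proof (Derive2_le_M0 A theta M1 (fun b' => proj2 (Htheta b' 2%nat ltac:(lia))) HM1) as HE2.
  pose proof (Derive_theta_w_le_eps_nu B A theta (Hset_locally c d n) Hmaps HD1
                R0 del L HR0 Hdel Hseg HL) as HE1.
  apply (ext_at_abs_le A (Derive_n (theta_w theta w) 2) x l); [intros y Hy|exact Hx|exact Hlim].
  eapply Rle_trans;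
    [exact (Derive2_theta_w_le B A theta (Hset_locally c d n) Hmaps HD1 HD2 _ _ HE1 HE2 w y Hy)|].
  rewrite Hw. destruct k as [|k]; [lia|].
  rewrite Nat.sub_succ, Nat.sub_0_r, sum_f_R0_sum_below.
  apply Req_le. f_equal. apply sum_below_ext. intros j Hj. do 2 f_equal. lia.
Qed.
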